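(* For any eviction algorithm $\mathcal Q$ and any input (and, if $\mathcal Q$ is randomized, any realization of its random bits) there exists an eviction graph $H_{\mathcal Q}$ with edge set $E$ such that $$\mathrm{OBJ}_{\mathcal Q}\le \mathrm{OPT}+|E|.$$
   Context: Caching setting: cache of capacity $k$, requests $\sigma(1),\dots,\sigma(T)$ processed online starting from an empty cache; on a hit nothing happens, on a miss the page is loaded and, if the cache is full, one cached page is evicted first. $\mathrm{OBJ}_{\mathcal Q}$ is the number of misses of $\mathcal Q$; $\mathrm{OPT}$ is the number of misses of Belady's optimal offline algorithm (evicts the cached page whose next request is furthest in the future). $\nu(t)=\min\{s>t:\sigma(s)=\sigma(t)\}$ ($T+1$ if none). Cached pages are identified by the index of their most recent request: $\mathcal I_{\mathcal Q}(t)$ is the set of indices $\max\{t'\le t:\sigma(t')=s\}$ over pages $s$ cached after processing request $t$. An eviction graph $H_{\mathcal Q}$ is a directed graph on vertex set $\{1,\dots,T\}$ such that for every edge $(i,j)$ there is a time $t+1$ at which $\mathcal Q$ evicts $\sigma(j)$ with $j\in\mathcal I_{\mathcal Q}(t)$ while $i\in\mathcal I_{\mathcal Q}(t)$ and $\nu(i)>\nu(j)$; moreover for each $j$ there is at most one edge of the form $(i,j)$. *)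

From mathcomp Require Import all_boot.
Set Implicit Arguments. Unset Strict Implicit. Unset Printing Implicit Defensive.

(* Pages are natural numbers.  The request sequence is [sigma : seq nat];
   requests are 1-indexed: the t-th request (1 <= t <= T := size sigma) is
   [req sigma t = nth 0 sigma t.-1]. *)

Section Caching.
Variables (k : nat) (sigma : seq nat).

Definition T := size sigma.
Definition req (t : nat) : nat := nth 0 sigma t.-1.

Definition next_req (t p : nat) : nat :=
  head T.+1 [seq s <- iota t.+1 (T - t) | req s == p].

Definition nu (t : nat) : nat := next_req t (req t).

Definition last_req (t p : nat) : nat :=
  last 0 [seq s <- iota 1 t | req s == p].

(* An eviction algorithm, for a fixed input and a fixed realization of its
   random bits, is described by its eviction decision: at time t, with
   current cache content c (list of cached pages), it evicts page [Q t c].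
   This is only consulted on a miss with a full cache. *)
Definition policy := nat -> seq nat -> nat.

Definition step (Q : policy) (t : nat) (c : seq nat) : seq nat :=
  let p := req t in
  if p \in c then c
  else if size c < k then p :: c
  else p :: rem (Q t c) c.

Fixpoint cache (Q : policy) (t : nat) : seq nat :=
  match t with
  | 0 => [::]
  | t'.+1 => step Q t'.+1 (cache Q t')
  end.

Definition miss (Q : policy) (t : nat) : bool := req t \notin cache Q t.-1.

Definition evicts_at (Q : policy) (t : nat) : bool :=
  miss Q t && (k <= size (cache Q t.-1)).

Definition valid_policy (Q : policy) : Prop :=
  forall t, 1 <= t <= T -> evicts_at Q t -> Q t (cache Q t.-1) \in cache Q t.-1.

Definition OBJ (Q : policy) : nat := \sum_(1 <= t < T.+1) miss Q t.

(* Belady: evict the cached page whose next request is furthest in the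
   future (ties broken in favour of the first such page in the list). *)
Definition belady : policy := fun t c =>
  foldl (fun best p => if next_req t best < next_req t p then p else best)
        (head 0 c) c.

Definition OPT : nat := OBJ belady.

(* I_Q(t): indices of the most recent requests of pages cached after t *)
Definition inI (Q : policy) (t j : nat) : bool :=
  [&& 1 <= j, j <= t, req j \in cache Q t & last_req t (req j) == j].

Definition eviction_graph (Q : policy) (E : seq (nat * nat)) : Prop :=
  [/\ uniq E,
      (forall e, e \in E -> (1 <= e.1 <= T) && (1 <= e.2 <= T)),
      (forall e, e \in E ->
         exists t, [/\ t.+1 <= T, evicts_at Q t.+1,
                       Q t.+1 (cache Q t) = req e.2,
                       inI Q t e.2 && inI Q t e.1 & nu e.1 > nu e.2])
    & (forall j, count (fun e => e.2 == j) E <= 1)].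

End Caching.

From Pilot Require Import Defs.
From mathcomp Require Import all_boot zify.
Set Implicit Arguments. Unset Strict Implicit. Unset Printing Implicit Defensive.

(* Let [opt_misses n t c] be the least number of misses on the remaining requests
   when starting from cache [c].  At each step of [Q], its miss plus the optimum
   from its new cache is at most the optimum from its old cache, by Belady's
   exchange argument, as long as [Q] evicts a page requested furthest in the
   future; otherwise the excess is at most one, because two caches differing in
   one page have optima differing by at most one.  Summing along the run gives
   OBJ <= OPT + #deviations.  A deviation at time [t] yields the edge from a
   cached page requested later to the evicted page; distinct deviations give
   distinct targets, since an evicted page must be requested again before it
   can be evicted again. *)

Lemma uniq_count_leq (T : eqType) (a1 a2 : pred T) (s1 s2 : seq T) :
  uniq s1 -> {in s1, forall w, a1 w -> a2 w && (w \in s2)} ->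
  count a1 s1 <= count a2 s2.
Proof.
move=> us1 sub; rewrite -!size_filter; apply: uniq_leq_size; first exact: filter_uniq.
move=> w; rewrite !mem_filter => /andP[a1w ws1].
by have /andP[-> ->] := sub w ws1 a1w.
Qed.

Lemma count_uniq_leq1 (T : eqType) (a : pred T) (s : seq T) x :
  uniq s -> {in s, forall w, a w -> w = x} -> count a s <= 1.
Proof.
move=> us ax; apply: leq_trans (leq_b1 (x \in s)); rewrite -(count_uniq_mem x us).
by apply: uniq_count_leq => // w ws /(ax w ws) wx; rewrite /= wx eqxx -wx.
Qed.

Lemma exists_mem_notin (T : eqType) (a b : seq T) :
  uniq a -> size b < size a -> exists2 z, z \in a & z \notin b.
Proof.
move=> ua ltba; case: (boolP (all (mem b) a)) => [/allP sub | /allPn[z za zb]].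
  by have := uniq_leq_size ua sub; rewrite leqNgt ltba.
by exists z.
Qed.

Lemma mem_foldl_choice (T : eqType) (f : T -> T -> T) x (s : seq T) :
  (forall a b, f a b \in [:: a; b]) -> foldl f x s \in x :: s.
Proof.
move=> f_choice; elim: s x => [|y s IH] x /=; first exact: mem_head.
have := IH (f x y); rewrite !inE => /orP[/eqP-> | ->]; last by rewrite !orbT.
by have := f_choice x y; rewrite !inE => /orP[] ->; rewrite ?orbT.
Qed.

Lemma count_rem_leq (T : eqType) (a : pred T) x (s : seq T) :
  a x + count a (rem x s) <= (x \notin s) + count a s.
Proof.
case: (boolP (x \in s)) => [xs | /rem_id->]; last by rewrite leq_add2r leq_b1.
by rewrite (permP (perm_to_rem xs)).
Qed.

Definition minf (f : nat -> nat) (s : seq nat) : nat :=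
  foldr (fun p m => minn (f p) m) (f (head 0 s)) s.

Lemma minf_le f s p : p \in s -> minf f s <= f p.
Proof.
rewrite /minf; move: (f (head 0 s)) => m0.
elim: s => //= q s IH; rewrite inE => /orP[/eqP-> | ps].
  exact: geq_minl.
by rewrite geq_min IH ?orbT.
Qed.

Lemma minf_attained f s : s != [::] -> exists2 p, p \in s & minf f s = f p.
Proof.
rewrite /minf; case: s => // q0 s _ /=; set m0 := f q0.
have [p ps ->] : exists2 p, p \in q0 :: s & foldr (fun p m => minn (f p) m) m0 s = f p.
  elim: s => [|q s [p ps IH]] /=; first by exists q0; rewrite ?mem_head.
  rewrite IH; case: (leqP (f q) (f p)) => _.
    by exists q => //; rewrite !inE eqxx orbT.
  by exists p => //; move: ps; rewrite !inE => /orP[] ->; rewrite ?orbT.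
case: (leqP (f q0) (f p)) => _.
  by exists q0; rewrite ?mem_head.
by exists p.
Qed.

Section Caching.
Variables (k : nat) (sigma : seq nat).
Local Notation T := (T sigma).
Local Notation req := (req sigma).
Local Notation next_req := (next_req sigma).
Local Notation last_req := (last_req sigma).

Lemma next_reqS t p : t < T ->
  next_req t p = if req t.+1 == p then t.+1 else next_req t.+1 p.
Proof. by move=> ltT; rewrite /Defs.next_req -(subnSK ltT) /=; case: (req t.+1 == p). Qed.

Lemma next_reqS_neq t p : t < T -> req t.+1 != p -> next_req t p = next_req t.+1 p.
Proof. by move=> ltT ne; rewrite next_reqS // (negbTE ne). Qed.

Lemma next_req_gt t p : t <= T -> t < next_req t p.
Proof.
move=> leT; move Dn: (T - t) => n; elim: n t leT Dn => [|n IH] t leT Dn.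
  by rewrite /Defs.next_req Dn.
have ltT : t < T by rewrite -subn_gt0 Dn.
rewrite next_reqS //; case: eqP => // _.
by apply: ltn_trans (IH t.+1 ltT _); rewrite ?subnS ?Dn.
Qed.

Lemma next_req_skip i j p : i <= j <= T ->
  (forall s, i < s <= j -> req s != p) -> next_req i p = next_req j p.
Proof.
elim: j => [|j IH] /andP[le_ij leT] noreq; first by rewrite leqn0 in le_ij; rewrite (eqP le_ij).
case: (ltngtP i j.+1) le_ij => // [lt_ij _ | -> //].
rewrite IH; last 2 first.
- by rewrite -ltnS lt_ij ltnW.
- by move=> s /andP[lt_is le_sj]; apply: noreq; rewrite lt_is leqW.
by rewrite next_reqS // (negbTE (noreq _ _)) // lt_ij leqnn.
Qed.

Lemma last_reqS t p : last_req t.+1 p = if req t.+1 == p then t.+1 else last_req t p.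
Proof.
rewrite /Defs.last_req.
have ->: iota 1 t.+1 = rcons (iota 1 t) t.+1 by rewrite -cats1 -(addn1 t) iotaD addnC.
rewrite filter_rcons.
by case: (req t.+1 == p); rewrite ?last_rcons.
Qed.

Lemma last_req_spec t p : 0 < last_req t p ->
  [/\ last_req t p <= t, req (last_req t p) = p &
      forall s, last_req t p < s <= t -> req s != p].
Proof.
elim: t => // t IH; rewrite last_reqS; case: eqP => [<- | ne_p] pos.
  by split=> // s /andP[lt_ts le_st]; rewrite ltnNge le_st in lt_ts.
have [le_t -> noreq] := IH pos; split=> //; first exact: leqW.
move=> s /andP[lt_s]; rewrite leq_eqVlt => /orP[/eqP-> | lt_st]; first exact/eqP.
by apply: noreq; rewrite lt_s.
Qed.

Definition wf_cache (c : seq nat) : bool := uniq c && (size c <= k).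

Definition admissible (t : nat) (c c' : seq nat) : Prop :=
  if req t.+1 \in c then c' = c
  else if size c < k then c' = req t.+1 :: c
  else exists2 p, p \in c & c' = req t.+1 :: rem p c.

Fixpoint opt_misses (n t : nat) (c : seq nat) : nat :=
  if n is n'.+1 then
    if req t.+1 \in c then opt_misses n' t.+1 c
    else if size c < k then (opt_misses n' t.+1 (req t.+1 :: c)).+1
    else (minf (fun p => opt_misses n' t.+1 (req t.+1 :: rem p c)) c).+1
  else 0.

Definition missing (a b : seq nat) : nat := count (fun w => w \notin a) b.

Lemma opt_missesS_le n t c c' : admissible t c c' ->
  opt_misses n.+1 t c <= (req t.+1 \notin c) + opt_misses n t.+1 c'.
Proof.
rewrite /admissible /=; case: (req t.+1 \in c) => [-> // |].
by case: (size c < k) => [-> // | [p pc ->]]; rewrite add1n ltnS minf_le.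
Qed.

Lemma admissible_wf t c c' : wf_cache c -> admissible t c c' -> wf_cache c'.
Proof.
case/andP=> uc sc; rewrite /admissible; case: ifPn => [_ -> | rc]; first by rewrite /wf_cache uc.
case: ltnP => [lt_ck -> | _ [p pc ->]]; first by rewrite /wf_cache /= rc uc.
rewrite /wf_cache /= rem_uniq // size_rem // prednK; last by case: (c) pc.
by rewrite sc (contra (@mem_rem _ _ _ _) rc).
Qed.

Lemma admissible_req t c c' : admissible t c c' -> req t.+1 \in c'.
Proof.
rewrite /admissible; case: ifP => [rc -> // | _].
by case: ifP => [_ -> | _ [p _ ->]]; rewrite mem_head.
Qed.

Lemma admissible_sub t c c' : admissible t c c' -> {subset c' <= req t.+1 :: c}.
Proof.
rewrite /admissible => adm w; case: ifP adm => [_ -> wc | _]; first by rewrite inE wc orbT.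
case: ifP => [_ -> // | _ [p _ ->]]; rewrite !inE => /orP[-> // | /mem_rem ->].
by rewrite orbT.
Qed.

Hypothesis k_gt0 : 0 < k.

Lemma opt_missesS_attained n t c : exists2 c', admissible t c c' &
  opt_misses n.+1 t c = (req t.+1 \notin c) + opt_misses n t.+1 c'.
Proof.
rewrite /admissible /=; case: (req t.+1 \in c); first by exists c.
case: ltnP => [_ | le_kc]; first by exists (req t.+1 :: c).
have c_nil : c != [::] by case: (c) le_kc; rewrite // leqNgt k_gt0.
have [p pc ->] := minf_attained (fun p => opt_misses n t.+1 (req t.+1 :: rem p c)) c_nil.
by exists (req t.+1 :: rem p c) => //; exists p.
Qed.

Lemma admissible_follow t a b' : wf_cache a -> wf_cache b' -> req t.+1 \in b' ->
  exists2 a', admissible t a a' & {in b', forall w, w \in a -> w \in a'}.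
Proof.
case/andP=> ua _ /andP[ub' sb'] rb'.
case: (boolP (req t.+1 \in a)) => [ra | ra]; first by exists a; rewrite /admissible ?ra.
case: (ltnP (size a) k) => [lt_ak | le_ka].
  exists (req t.+1 :: a); first by rewrite /admissible (negbTE ra) lt_ak.
  by move=> w _ wa; rewrite inE wa orbT.
have [z za zb'] : exists2 z, z \in a & z \notin rem (req t.+1) b'.
  apply: exists_mem_notin; rewrite // size_rem // prednK ?(leq_trans _ le_ka) //.
  by case: (b') rb'.
exists (req t.+1 :: rem z a); first by rewrite /admissible (negbTE ra) ltnNge le_ka; exists z.
move=> w wb' wa; rewrite inE (mem_rem_uniq _ ua) inE wa andbT.
case: (w =P req t.+1) => // /eqP ne_wr; apply: contraNneq zb' => <-.
by rewrite (mem_rem_uniq _ ub') inE ne_wr.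
Qed.

Lemma opt_misses_lipschitz n t a b : wf_cache a -> wf_cache b ->
  opt_misses n t a <= opt_misses n t b + missing a b.
Proof.
elim: n t a b => [|n IH] t a b wa wb; first by [].
have [b' adm_b ->] := opt_missesS_attained n t b.
have wb' := admissible_wf wb adm_b.
have [a' adm_a follow] := admissible_follow wa wb' (admissible_req adm_b).
have le_missing : missing a' b' <= missing a (rem (req t.+1) b).
  apply: uniq_count_leq => [|w w_b' w_a']; first by case/andP: wb'.
  have ne_wr : w != req t.+1 by apply: contraNneq w_a' => ->; exact: admissible_req adm_a.
  have := admissible_sub adm_b w_b'; rewrite inE (negbTE ne_wr) /= => w_b.
  by rewrite (contra (follow w w_b')) //= (mem_rem_uniq _ (proj1 (andP wb))) inE ne_wr.
have := count_rem_leq (fun w => w \notin a) (req t.+1) b.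
have := IH t.+1 a' b' (admissible_wf wa adm_a) wb'.
have := opt_missesS_le n adm_a.
move: le_missing; rewrite /missing /=; lia.
Qed.

Definition replaced (b : seq nat) (x y : nat) (a : seq nat) : Prop :=
  [/\ x \in b, y \notin b & forall w, (w \in a) = (w == y) || (w != x) && (w \in b)].

Lemma replaced_size b x y a : uniq a -> uniq b -> replaced b x y a -> size a = size b.
Proof.
move=> ua ub [xb yb mem_a].
have yx : y \notin rem x b by apply: contra yb; exact: mem_rem.
rewrite (perm_size (uniq_perm ua (_ : uniq (y :: rem x b)) _)) /= ?size_rem ?prednK //.
- by case: (b) xb.
- by rewrite yx rem_uniq.
by move=> w; rewrite mem_a inE (mem_rem_uniq _ ub).
Qed.

Lemma replaced_cons b x y a r : r != x -> r != y ->
  replaced b x y a -> replaced (r :: b) x y (r :: a).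
Proof.
move=> rx ry [xb yb mem_a]; split=> [|| w]; first by rewrite inE xb orbT.
  by rewrite inE negb_or eq_sym ry.
by rewrite !inE mem_a; case: (w =P r) => [-> | _]; rewrite ?rx ?(negbTE ry).
Qed.

Lemma replaced_rem b x y a z : uniq a -> uniq b -> z != x -> z != y ->
  replaced b x y a -> replaced (rem z b) x y (rem z a).
Proof.
move=> ua ub zx zy [xb yb mem_a]; rewrite /replaced !(mem_rem_uniq _ ub) !inE.
split; rewrite ?xb ?(negbTE yb) 1?eq_sym ?zx ?andbF // => w.
rewrite (mem_rem_uniq _ ua) (mem_rem_uniq _ ub) !inE mem_a.
by case: (w =P z) => [-> | _]; rewrite ?(negbTE zy) ?zx ?andbF.
Qed.

Lemma replaced_rem_rem c x y : uniq c -> x \in c -> y \in c -> x != y ->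
  replaced (rem y c) x y (rem x c).
Proof.
move=> uc xc yc xy; rewrite /replaced !(mem_rem_uniq _ uc) !inE xy xc eqxx.
split=> // w; rewrite !(mem_rem_uniq _ uc) !inE.
by case: (eqVneq w y) => [-> | wy]; rewrite ?(eq_sym y x) ?xy ?yc ?wy.
Qed.

Lemma exchange_step_new t a b x y b' : wf_cache b -> replaced b x y a ->
  admissible t b b' -> req t.+1 = y ->
  exists2 a', admissible t a a' & (req t.+1 \notin a) + missing a' b' <= (req t.+1 \notin b).
Proof.
move=> wb [xb yb mem_a] adm_b ry.
have ra : req t.+1 \in a by rewrite mem_a ry eqxx.
exists a; first by rewrite /admissible ra.
rewrite ra ry yb /=; apply: (count_uniq_leq1 (x := x)).
  by case/andP: (admissible_wf wb adm_b).
move=> w /(admissible_sub adm_b); rewrite inE mem_a => /orP[/eqP-> | wb'].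
  by rewrite ry eqxx.
by rewrite wb' andbT negb_or negbK => /andP[_ /eqP].
Qed.

Lemma exchange_step_other t a b x y b' : wf_cache a -> wf_cache b -> replaced b x y a ->
  admissible t b b' -> req t.+1 != x -> req t.+1 != y ->
  exists2 a', admissible t a a' &
    (req t.+1 \in a) = (req t.+1 \in b) /\ replaced b' x y a'
    \/ (req t.+1 \notin a) + missing a' b' <= (req t.+1 \notin b).
Proof.
move=> /andP[ua _] /andP[ub _] repl adm_b rx ry; have [xb yb mem_a] := repl.
have ra : (req t.+1 \in a) = (req t.+1 \in b) by rewrite mem_a (negbTE ry) rx.
have size_ab := replaced_size ua ub repl.
rewrite /admissible in adm_b.
case: (boolP (req t.+1 \in b)) => rb.
  move: adm_b; rewrite rb => ->.
  by exists a; [rewrite /admissible ra rb | left; rewrite ra].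
move: adm_b; rewrite (negbTE rb); case: ltnP => [lt_bk -> | le_kb [z zb ->]].
  exists (req t.+1 :: a); first by rewrite /admissible ra (negbTE rb) size_ab lt_bk.
  by left; split; [rewrite ra (negbTE rb) | apply: replaced_cons].
have zy : z != y by apply: contraNneq yb => <-.
case: (z =P x) => [zx | /eqP zx].
  have ya : y \in a by rewrite mem_a eqxx.
  exists (req t.+1 :: rem y a).
    by rewrite /admissible ra (negbTE rb) size_ab ltnNge le_kb; exists y.
  right; rewrite ra (negbTE rb) -[X in _ <= X]addn0 leq_add2l leqn0 eqn0Ngt -has_count.
  apply/hasPn => w; rewrite negbK inE => /orP[/eqP-> | ]; first exact: mem_head.
  rewrite zx (mem_rem_uniq _ ub) inE => /andP[wx wb].
  rewrite inE (mem_rem_uniq _ ua) inE mem_a wx wb orbT andbT.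
  by apply/orP; right; apply: contraNneq yb => <-.
have za : z \in a by rewrite mem_a zx zb (negbTE zy).
exists (req t.+1 :: rem z a).
  by rewrite /admissible ra (negbTE rb) size_ab ltnNge le_kb; exists z.
left; split; first by rewrite ra (negbTE rb).
by apply/replaced_cons/replaced_rem.
Qed.

Lemma opt_misses_replace n t a b x y : t + n <= T -> wf_cache a -> wf_cache b ->
  replaced b x y a -> next_req t y <= next_req t x -> opt_misses n t a <= opt_misses n t b.
Proof.
elim: n t a b => [|n IH] t a b le_tnT wa wb repl le_yx; first by [].
have ltT : t < T by rewrite (leq_trans _ le_tnT) // addnS ltnS leq_addr.
have [b' adm_b ->] := opt_missesS_attained n t b.
have wb' := admissible_wf wb adm_b.
have via_lipschitz a' : admissible t a a' ->
    (req t.+1 \notin a) + missing a' b' <= (req t.+1 \notin b) ->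
    opt_misses n.+1 t a <= (req t.+1 \notin b) + opt_misses n t.+1 b'.
  move=> adm_a le_miss; have := opt_missesS_le n adm_a.
  have := opt_misses_lipschitz n t.+1 (admissible_wf wa adm_a) wb'; lia.
case: (req t.+1 =P y) => [ry | /eqP ry].
  by have [a' adm_a] := exchange_step_new wb repl adm_b ry; apply: via_lipschitz.
have rx : req t.+1 != x.
  apply: contraTneq le_yx => rx; rewrite -ltnNge (next_reqS x ltT) rx eqxx.
  by rewrite (next_reqS_neq ltT ry) next_req_gt.
have [a' adm_a [[ra repl'] | le_miss]] := exchange_step_other wa wb repl adm_b rx ry.
  apply: leq_trans (opt_missesS_le n adm_a) _; rewrite ra leq_add2l.
  apply: IH (admissible_wf wa adm_a) wb' repl' _; first by rewrite addSnnS.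
  by rewrite -(next_reqS_neq ltT rx) -(next_reqS_neq ltT ry).
exact: via_lipschitz le_miss.
Qed.

Lemma wf_evict t c z : wf_cache c -> k <= size c -> req t.+1 \notin c -> z \in c ->
  wf_cache (req t.+1 :: rem z c).
Proof.
move=> wc le_kc rc zc; apply: (admissible_wf (t := t) wc).
by rewrite /admissible (negbTE rc) ltnNge le_kc; exists z.
Qed.

Lemma opt_misses_evict_later n t c x y : t.+1 + n <= T -> wf_cache c -> k <= size c ->
  req t.+1 \notin c -> x \in c -> y \in c -> next_req t y <= next_req t x ->
  opt_misses n t.+1 (req t.+1 :: rem x c) <= opt_misses n t.+1 (req t.+1 :: rem y c).
Proof.
move=> le_T wc le_kc rc xc yc le_yx; case: (x =P y) => [-> // | /eqP xy].
have ltT : t < T by rewrite (leq_trans _ le_T) // ltnS leq_addr.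
have rx : req t.+1 != x by apply: contraNneq rc => ->.
have ry : req t.+1 != y by apply: contraNneq rc => ->.
apply: (opt_misses_replace (x := x) (y := y)) (wf_evict wc le_kc rc xc) _ _ _ => //.
- exact: wf_evict wc le_kc rc yc.
- exact: replaced_cons rx ry (replaced_rem_rem (proj1 (andP wc)) xc yc xy).
by rewrite -(next_reqS_neq ltT rx) -(next_reqS_neq ltT ry).
Qed.

Local Notation cache := (cache k sigma).
Local Notation miss := (miss k sigma).
Local Notation evicts_at := (evicts_at k sigma).
Local Notation valid_policy := (valid_policy k sigma).

Lemma mem_step P t c p : p \in step k sigma P t c -> p = req t \/ p \in c.
Proof.
rewrite /step; case: (req t \in c); first by right.
case: (size c < k); rewrite inE => /orP[/eqP-> | pc]; [by left | by right | by left |].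
by right; exact: mem_rem pc.
Qed.

Lemma cache_admissible P t : valid_policy P -> t < T -> admissible t (cache P t) (cache P t.+1).
Proof.
move=> valid ltT; rewrite /admissible /= /step /=.
case: (boolP (req t.+1 \in cache P t)) => // rc.
case: ltnP => // le_kc; exists (P t.+1 (cache P t)) => //.
by apply: (valid t.+1); rewrite ?ltT // /Defs.evicts_at /Defs.miss /= rc le_kc.
Qed.

Lemma cache_wf P t : valid_policy P -> t <= T -> wf_cache (cache P t).
Proof.
move=> valid; elim: t => [// | t IH] ltT.
exact: admissible_wf (IH (ltnW ltT)) (cache_admissible valid ltT).
Qed.

Lemma belady_mem t c : c != [::] -> belady sigma t c \in c.
Proof.
case: c => // p0 c _; rewrite /belady [head _ _]/=.
have f_choice a b : (if next_req t a < next_req t b then b else a) \in [:: a; b].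
  by case: ifP; rewrite !inE eqxx ?orbT.
have := mem_foldl_choice p0 (p0 :: c) f_choice.
by rewrite inE => /orP[/eqP-> | //]; exact: mem_head.
Qed.

Lemma belady_valid : valid_policy (belady sigma).
Proof.
move=> t _ /andP[_ le_kc]; apply: belady_mem.
by case: (cache _ _) le_kc; rewrite // leqNgt k_gt0.
Qed.

Lemma cache_last_req_gt0 P t p : p \in cache P t -> 0 < last_req t p.
Proof.
elim: t => // t IH /mem_step[-> | pc]; rewrite last_reqS ?eqxx //.
by case: (_ == _) => //; apply: IH.
Qed.

Lemma cache_reenter P s1 s2 p : s1 <= s2 -> p \notin cache P s1 -> p \in cache P s2 ->
  exists2 s, s1 < s <= s2 & req s = p.
Proof.
elim: s2 => [|s2 IH]; first by rewrite leqn0 => /eqP-> /negbTE->.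
rewrite leq_eqVlt => /orP[/eqP-> /negbTE-> // | lt_s12 p_s1].
case/mem_step => [-> | p_s2]; first by exists s2.+1; rewrite ?lt_s12 ?leqnn.
by have [s /andP[lt_s1s le_ss2] rs] := IH lt_s12 p_s1 p_s2; exists s; rewrite ?lt_s1s ?leqW.
Qed.

Lemma opt_misses_le_misses P n t : valid_policy P -> t + n = T ->
  opt_misses n t (cache P t) <= \sum_(t.+1 <= s < T.+1) miss P s.
Proof.
move=> valid; elim: n t => [// | n IH] t tn.
have ltT : t < T by rewrite -tn addnS ltnS leq_addr.
rewrite big_ltn ?ltnS //; apply: leq_trans (opt_missesS_le n (cache_admissible valid ltT)) _.
by rewrite leq_add2l IH ?addSnnS.
Qed.

Definition evicted (Q : policy) (t : nat) : nat := Q t.+1 (cache Q t).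

Definition not_furthest (Q : policy) (t : nat) : bool :=
  evicts_at Q t.+1 && has (fun p => next_req t (evicted Q t) < next_req t p) (cache Q t).

Lemma miss_opt_missesS Q n t : valid_policy Q -> t + n.+1 <= T ->
  miss Q t.+1 + opt_misses n t.+1 (cache Q t.+1)
    <= opt_misses n.+1 t (cache Q t) + not_furthest Q t.
Proof.
move=> valid le_T; have ltT : t < T by rewrite (leq_trans _ le_T) // addnS ltnS leq_addr.
have wc := cache_wf valid (ltnW ltT); have [uc _] := andP wc.
have [c' adm ->] := opt_missesS_attained n t (cache Q t).
rewrite /Defs.miss /= -addnA leq_add2l.
move: adm; rewrite /not_furthest /Defs.evicts_at /Defs.miss /evicted /admissible /= /step.
case: ifP => [_ -> | rc]; first exact: leq_addr.
case: ltnP => [_ -> | le_kc [y yc ->]]; first exact: leq_addr.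
set q := Q t.+1 (cache Q t).
have qc : q \in cache Q t by apply: valid; rewrite ?ltT // /Defs.evicts_at /Defs.miss /= rc le_kc.
case: (boolP (has _ _)) => [_ | /hasPn later_q] /=.
  have [wq wy] := (wf_evict wc le_kc (negbT rc) qc, wf_evict wc le_kc (negbT rc) yc).
  apply: leq_trans (opt_misses_lipschitz n t.+1 wq wy) _.
  rewrite leq_add2l; apply: (count_uniq_leq1 (x := q)).
    by rewrite /= rem_uniq ?(contra (@mem_rem _ _ _ _) (negbT rc)).
  move=> w; rewrite !inE (mem_rem_uniq _ uc) (mem_rem_uniq _ uc) !inE.
  case/orP=> [-> // | /andP[_ wc']]; rewrite wc' andbT negb_or negbK => /andP[_ /eqP //].
rewrite addn0; apply: opt_misses_evict_later; rewrite ?addSnnS ?rc //.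
by rewrite leqNgt later_q.
Qed.

Lemma misses_le_opt_misses Q n t : valid_policy Q -> t + n = T ->
  \sum_(t.+1 <= s < T.+1) miss Q s
    <= opt_misses n t (cache Q t) + count (not_furthest Q) (iota t n).
Proof.
move=> valid; elim: n t => [|n IH] t tn; first by rewrite addn0 in tn; rewrite big_geq // tn.
have ltT : t < T by rewrite -tn addnS ltnS leq_addr.
rewrite big_ltn ?ltnS //; have := IH t.+1 (etrans (addSnnS t n) tn).
have := miss_opt_missesS valid (eq_leq tn); rewrite /=; lia.
Qed.

Lemma OBJ_le_OPT_add Q : valid_policy Q ->
  OBJ k sigma Q <= OPT k sigma + count (not_furthest Q) (iota 0 T).
Proof.
move=> valid; apply: leq_trans (misses_le_opt_misses valid (add0n T)) _.
by rewrite leq_add2r; apply: opt_misses_le_misses belady_valid (add0n T).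
Qed.

Definition later_page (Q : policy) (t : nat) : nat :=
  nth 0 (cache Q t) (find (fun p => next_req t (evicted Q t) < next_req t p) (cache Q t)).

Definition eviction_edges (Q : policy) : seq (nat * nat) :=
  [seq (last_req t (later_page Q t), last_req t (evicted Q t))
  | t <- [seq t <- iota 0 T | not_furthest Q t]].

Lemma not_furthestP Q t : valid_policy Q -> t < T -> not_furthest Q t ->
  [/\ evicted Q t \in cache Q t, later_page Q t \in cache Q t,
      next_req t (evicted Q t) < next_req t (later_page Q t)
    & evicted Q t \notin cache Q t.+1].
Proof.
move=> valid ltT /andP[ev later]; have [uc _] := andP (cache_wf valid (ltnW ltT)).
have qc : evicted Q t \in cache Q t by apply: (valid t.+1); rewrite ?ltT.
split=> //; first by rewrite /later_page mem_nth // -has_find.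
  exact: (nth_find 0 later).
move: ev; rewrite /Defs.evicts_at /Defs.miss /= /step => /andP[rc le_kc].
rewrite (negbTE rc) ltnNge le_kc /= inE negb_or (mem_rem_uniqF _ uc) andbT.
by apply: contraNneq rc => <-.
Qed.

Lemma last_req_cached Q t p : t <= T -> p \in cache Q t ->
  [/\ 0 < last_req t p, last_req t p <= t, req (last_req t p) = p
    & nu sigma (last_req t p) = next_req t p].
Proof.
move=> leT pc; have pos := cache_last_req_gt0 pc.
have [le_t rp noreq] := last_req_spec pos; split=> //.
by rewrite /nu rp (next_req_skip (j := t)) ?le_t.
Qed.

Lemma inI_last_req Q t p : t <= T -> p \in cache Q t -> inI k sigma Q t (last_req t p).
Proof.
move=> leT pc; have [pos le_t rp _] := last_req_cached leT pc.
by rewrite /inI pos le_t rp pc eqxx.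
Qed.

(* A page evicted at [t1] must be requested again before it can be evicted at
   [t2 > t1], so its most recent request differs. *)
Lemma evicted_last_req_neq Q t1 t2 : valid_policy Q -> t1 < t2 -> t2 < T ->
  not_furthest Q t1 -> not_furthest Q t2 ->
  last_req t1 (evicted Q t1) != last_req t2 (evicted Q t2).
Proof.
move=> valid lt12 lt2 nf1 nf2; apply/eqP => eq12; have lt1 := ltn_trans lt12 lt2.
have [q1c _ _ q1_gone] := not_furthestP valid lt1 nf1.
have [q2c _ _ _] := not_furthestP valid lt2 nf2.
have [_ le1 r1 _] := last_req_cached (ltnW lt1) q1c.
have [_ _ r2 _] := last_req_cached (ltnW lt2) q2c.
have eq_q : evicted Q t1 = evicted Q t2 by rewrite -r1 -r2 eq12.
rewrite eq_q in q1_gone.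
have [s /andP[lt1s le_st2] rs] := cache_reenter lt12 q1_gone q2c.
have [_ _ noreq] := last_req_spec (cache_last_req_gt0 q2c).
have := noreq s; rewrite -eq12 (leq_ltn_trans le1 (ltnW lt1s)) le_st2 rs eqxx.
by move/(_ isT).
Qed.

Lemma evicted_last_req_inj Q : valid_policy Q ->
  {in [seq t <- iota 0 T | not_furthest Q t] &,
    injective (fun t => last_req t (evicted Q t))}.
Proof.
move=> valid t1 t2; rewrite !mem_filter !mem_iota /= !add0n.
move=> /andP[nf1 lt1] /andP[nf2 lt2] eq12; case: (ltngtP t1 t2) => // [lt12 | lt21].
  by have := evicted_last_req_neq valid lt12 lt2 nf1 nf2; rewrite eq12 eqxx.
by have := evicted_last_req_neq valid lt21 lt1 nf2 nf1; rewrite eq12 eqxx.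
Qed.

Lemma eviction_edges_graph Q : valid_policy Q -> eviction_graph k sigma Q (eviction_edges Q).
Proof.
move=> valid.
have uniq_targets : uniq (map snd (eviction_edges Q)).
  rewrite -map_comp (map_inj_in_uniq (evicted_last_req_inj valid)).
  by rewrite filter_uniq // iota_uniq.
have edgeP e : e \in eviction_edges Q -> exists2 t, t < T /\ not_furthest Q t &
    e = (last_req t (later_page Q t), last_req t (evicted Q t)).
  by case/mapP=> t; rewrite mem_filter mem_iota /= => /andP[nf lt] ->; exists t.
split=> [| e /edgeP[t [lt nf] ->] | e /edgeP[t [lt nf] ->] | j].
- exact: map_uniq uniq_targets.
- have [qc pc _ _] := not_furthestP valid lt nf.
  have [pos1 le1 _ _] := last_req_cached (ltnW lt) pc.
  have [pos2 le2 _ _] := last_req_cached (ltnW lt) qc.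
  by rewrite /= pos1 pos2 (leq_trans le1 (ltnW lt)) (leq_trans le2 (ltnW lt)).
- have [qc pc lt_qp _] := not_furthestP valid lt nf.
  have [_ _ _ nu1] := last_req_cached (ltnW lt) pc.
  have [_ _ r2 nu2] := last_req_cached (ltnW lt) qc.
  exists t; split=> //; first by case/andP: nf.
  - by rewrite /= (inI_last_req (ltnW lt) qc) (inI_last_req (ltnW lt) pc).
  by rewrite nu1 nu2.
by rewrite -(count_map snd (pred1 j)) count_uniq_mem // leq_b1.
Qed.

End Caching.

Theorem mainTheorem5 (k : nat) (sigma : seq nat) (Q : policy) :
  0 < k -> valid_policy k sigma Q ->
  exists E : seq (nat * nat),
    eviction_graph k sigma Q E /\ OBJ k sigma Q <= OPT k sigma + size E.
Proof.
move=> k_gt0 valid; exists (eviction_edges k sigma Q).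
split; first exact: eviction_edges_graph.
by rewrite size_map size_filter; exact: OBJ_le_OPT_add.
Qed.
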